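(* Let $F$ and $G$ be finite graphs, let $n=v(G)$, and let $W_G$ be a graphon representation of $G$. Then $\mathsf{fcov}(F,G)=n\cdot\mathsf{fcov}(F,W_G)$.
   Context: $(\Omega,\nu)$ is an atomless Borel probability space; a graphon is a symmetric measurable $W:\Omega^2\to[0,1]$. Let $F$ have vertex set $[k]$. For a finite graph $G$, $\mathcal{F}_F(G)=\{(u_1,\dots,u_k)\in V(G)^k:u_iu_j\in E(G)\text{ for each }ij\in E(F)\}$. A fractional $F$-cover of $G$ is $\mathfrak{c}:V(G)\to[0,1]$ with $\sum_{i=1}^k\mathfrak{c}(u_i)\ge1$ for each $(u_1,\dots,u_k)\in\mathcal{F}_F(G)$; its size is $\sum_v\mathfrak{c}(v)$, and $\mathsf{fcov}(F,G)$ is the minimum size. A graphon representation $W_G$ of $G$ with $V(G)=\{v_1,\dots,v_n\}$: partition $\Omega$ into measurable sets $\Omega_1,\dots,\Omega_n$ of measure $1/n$ and let $W_G=1$ on $\Omega_i\times\Omega_j$ if $v_iv_j\in E(G)$, $0$ otherwise. For a graphon $W$, $W^{\otimes F}(x_1,\dots,x_k)=\prod_{ij\in E(F),i<j}W(x_i,x_j)$ and $\mathcal{F}_F(W)=\{W^{\otimes F}\neq0\}$. A fractional $F$-cover of $W$ is a measurable $\mathfrak{c}:\Omega\to[0,1]$ with $\nu^k\big(\mathcal{F}_F(W)\cap\{(x_1,\dots,x_k):\sum_{i=1}^k\mathfrak{c}(x_i)<1\}\big)=0$; its size is $\int\mathfrak{c}\,\mathrm{d}\nu$, and $\mathsf{fcov}(F,W)$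 is the infimum of sizes. *)

From HB Require Import structures.
From mathcomp Require Import all_boot all_order all_algebra.
From mathcomp Require Import all_classical all_reals all_analysis.
Set Implicit Arguments. Unset Strict Implicit. Unset Printing Implicit Defensive.
Import Order.TTheory GRing.Theory Num.Theory.
Local Open Scope classical_set_scope.
Local Open Scope ring_scope.

Definition simple_graph (V : finType) (e : rel V) : Prop :=
  (forall u v, e u v = e v u) /\ (forall v, ~~ e v v).

Section Defs.
Variable R : realType.

Definition FF_G (k : nat) (eF : rel 'I_k) (V : finType) (eG : rel V)
  (u : 'I_k -> V) : Prop := forall i j, eF i j -> eG (u i) (u j).

Definition is_fcov_G (k : nat) (eF : rel 'I_k) (V : finType) (eG : rel V)
  (c : V -> R) : Prop :=
  (forall v, 0 <= c v <= 1) /\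
  (forall u : 'I_k -> V, FF_G eF eG u -> 1 <= \sum_(i < k) c (u i)).

Definition fcov_G (k : nat) (eF : rel 'I_k) (V : finType) (eG : rel V)
  : \bar R :=
  ereal_inf [set ((\sum_(v : V) c v)%:E) | c in is_fcov_G eF eG].

Definition fun_I0 (T : Type) : 'I_0 -> T :=
  fun i => False_rect T (match ltn_ord i in _ = b return (if b then False else True) with erefl => I end).

Definition fcons (T : Type) (k : nat) (x : T) (y : 'I_k -> T) : 'I_k.+1 -> T :=
  fun i => match unlift ord0 i with None => x | Some j => y j end.

Context {d : measure_display} {Omega : measurableType d}.

Fixpoint iint (nu : {measure set Omega -> \bar R}) (k : nat)
  : (('I_k -> Omega) -> \bar R) -> \bar R :=
  match k with
  | 0 => fun f => f (fun_I0 Omega)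
  | k'.+1 => fun f => (\int[nu]_x iint nu (fun y => f (fcons x y)))%E
  end.

Definition prod_measure_k (nu : {measure set Omega -> \bar R}) (k : nat)
  (S : set ('I_k -> Omega)) : \bar R :=
  iint nu (fun x => (\1_S x)%:E).

Definition atomless (nu : {measure set Omega -> \bar R}) : Prop :=
  forall A, measurable A -> (0 < nu A)%E ->
    exists B, [/\ measurable B, B `<=` A, (0 < nu B)%E & (nu B < nu A)%E].

Definition tensorF (k : nat) (eF : rel 'I_k) (W : Omega -> Omega -> R)
  (x : 'I_k -> Omega) : R :=
  \prod_(i < k) \prod_(j < k | (i < j)%N && eF i j) W (x i) (x j).

Definition FF_W (k : nat) (eF : rel 'I_k) (W : Omega -> Omega -> R)
  : set ('I_k -> Omega) := [set x | tensorF eF W x != 0].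

Definition is_fcov_W (nu : {measure set Omega -> \bar R}) (k : nat)
  (eF : rel 'I_k) (W : Omega -> Omega -> R) (c : Omega -> R) : Prop :=
  [/\ measurable_fun setT c,
      (forall x, 0 <= c x <= 1) &
      prod_measure_k nu (FF_W eF W `&` [set x | \sum_(i < k) c (x i) < 1])
        = 0%E].

Definition fcov_W (nu : {measure set Omega -> \bar R}) (k : nat)
  (eF : rel 'I_k) (W : Omega -> Omega -> R) : \bar R :=
  ereal_inf [set (\int[nu]_x (c x)%:E)%E | c in is_fcov_W nu eF W].

Definition graphon_rep (nu : {measure set Omega -> \bar R}) (V : finType)
  (eG : rel V) (P : V -> set Omega) (W : Omega -> Omega -> R) : Prop :=
  [/\ (forall v, measurable (P v)),
      (forall v, nu (P v) = (#|V|%:R^-1)%:E),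
      (forall u v, u != v -> P u `&` P v = set0),
      (forall x, exists v, P v x) &
      (forall u v x y, P u x -> P v y -> W x y = if eG u v then 1 else 0)].

End Defs.

From HB Require Import structures.
From mathcomp Require Import all_boot all_order all_algebra.
From mathcomp Require Import all_classical all_reals all_analysis.
From mathcomp Require Import lra measurable_realfun.
Import Order.TTheory GRing.Theory Num.Theory.
Set Implicit Arguments.
Unset Strict Implicit.
Unset Printing Implicit Defensive.
Local Open Scope classical_set_scope.
Local Open Scope ring_scope.

(** A fractional cover [c] of [G] yields the step function equal to [c v] on
    the part [P v], a cover of [W_G] of size [(\sum_v c v) / n].  Conversely a
    cover [c] of [W_G] is averaged to [c' v = n * \int_(P v) c].  For an
    [F]-copy [u] of [G] the box [P (u 1) * ... * P (u k)] lies in [F_F(W_G)],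
    so [\sum_i c (x i) >= 1] almost everywhere on it; integrating out one
    coordinate at a time shows [\sum_i \int_(P (u i)) c >= 1 / n], so [c'] is
    a cover of [G], of size [n * \int c]. *)

Section IntegralFacts.
Context (R : realType) (d : measure_display) (T : measurableType d)
  (mu : {measure set T -> \bar R}).

(* The integral of a nonnegative function is a supremum over simple minorants,
   so monotonicity holds without measurability; the integrands of [iint] are
   not known to be measurable. *)
Lemma ge0_le_integralT (f g : T -> \bar R) :
  (forall x, (0 <= f x)%E) -> (forall x, (f x <= g x)%E) ->
  (\int[mu]_x f x <= \int[mu]_x g x)%E.
Proof.
move=> f0 fg.
rewrite !ge0_integralTE //; last by move=> x; exact: le_trans (f0 x) (fg x).
apply: ereal_sup_le => _ [h /= hf <-]; exists h => //= x.
exact: le_trans (hf x) (fg x).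
Qed.

Lemma integral_eq0_null_set (f : T -> \bar R) (E : set T) (a : \bar R) :
  measurable E -> (0 < a)%E -> (forall x, (0 <= f x)%E) ->
  (forall x, E x -> (a <= f x)%E) -> (\int[mu]_x f x = 0)%E -> mu E = 0%E.
Proof.
move=> mE a0 f0 fa f_eq0.
have : (a * mu E <= 0)%E.
  rewrite -integral_cst // integral_mkcond -f_eq0; apply: ge0_le_integralT => x.
    by rewrite patchE; case: ifPn => // _; exact: ltW.
  by rewrite patchE; case: ifPn => [/set_mem/fa|_].
apply: contraTeq => muE0; rewrite -ltNge; apply: mule_gt0 => //.
by rewrite lt0e muE0 measure_ge0.
Qed.

Lemma integral_partition (V : finType) (P : V -> set T) (f : T -> R) :
  (forall v, measurable (P v)) -> (forall u v, u != v -> P u `&` P v = set0) ->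
  (forall x, exists v, P v x) -> measurable_fun setT f ->
  (\int[mu]_x (f x)%:E)%E = (\sum_(v : V) \int[mu]_(x in P v) (f x)%:E)%E.
Proof.
move=> mP disjP covP mf.
have cover : \big[setU/set0]_(v <- index_enum V) P v = setT.
  rewrite -bigcup_seq; apply/seteqP; split => // x _.
  have [v Pvx] := covP x; exists v => //=; exact: mem_index_enum.
have tP : trivIset [set` index_enum V] P.
  by apply/trivIsetP => u v _ _; exact: disjP.
have := integral_bigsetU_EFin mu mP (index_enum_uniq V) tP.
by rewrite /= cover; apply; exact/measurable_EFinP.
Qed.

Section UnitInterval.
Variables (A : set T) (c : T -> R).
Hypotheses (mA : measurable A) (mc : measurable_fun setT c)
  (c01 : forall x, 0 <= c x <= 1).

Lemma le_integral_fun01 : (\int[mu]_(x in A) (c x)%:E <= mu A)%E.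
Proof.
rewrite -[mu A]mul1e -integral_cst //; apply: ge0_le_integral => //.
- by move=> x _; rewrite lee_fin; case/andP: (c01 x).
- by apply/measurable_EFinP; exact: measurable_funS mc.
- by move=> x _; rewrite /= lee_fin; case/andP: (c01 x).
Qed.

Lemma Rintegral_fun01E : mu A \is a fin_num ->
  (\int[mu]_(x in A) (c x)%:E)%E = (\int[mu]_(x in A) c x)%:E.
Proof.
move=> muA; rewrite /Rintegral fineK // ge0_fin_numE.
  by apply: le_lt_trans le_integral_fun01 _; rewrite ltey_eq muA.
by apply: integral_ge0 => x _; rewrite lee_fin; case/andP: (c01 x).
Qed.

End UnitInterval.
End IntegralFacts.

Lemma fcons0 (T : Type) (k : nat) (x : T) (y : 'I_k -> T) : fcons x y ord0 = x.
Proof. by rewrite /fcons unlift_none. Qed.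

Lemma fconsS (T : Type) (k : nat) (x : T) (y : 'I_k -> T) (j : 'I_k) :
  fcons x y (lift ord0 j) = y j.
Proof. by rewrite /fcons liftK. Qed.

Section IteratedIntegral.
Context (R : realType) (d : measure_display) (Omega : measurableType d)
  (nu : {measure set Omega -> \bar R}).
Local Open Scope ereal_scope.

Lemma iint_ge0 (k : nat) (f : ('I_k -> Omega) -> \bar R) :
  (forall x, 0 <= f x) -> 0 <= iint nu f.
Proof.
elim: k f => [|k IH] f f0 /=; first exact: f0.
by apply: integral_ge0 => x _; apply: IH.
Qed.

Lemma le_iint (k : nat) (f g : ('I_k -> Omega) -> \bar R) :
  (forall x, 0 <= f x) -> (forall x, f x <= g x) -> iint nu f <= iint nu g.
Proof.
elim: k f g => [|k IH] f g f0 fg /=; first exact: fg.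
by apply: ge0_le_integralT => x; [apply: iint_ge0 | apply: IH].
Qed.

Lemma prod_measure_k_ge0 (k : nat) (S : set ('I_k -> Omega)) :
  0 <= prod_measure_k nu S.
Proof. by apply: iint_ge0 => x; rewrite lee_fin. Qed.

Lemma le_prod_measure_k (k : nat) (S S' : set ('I_k -> Omega)) :
  S `<=` S' -> prod_measure_k nu S <= prod_measure_k nu S'.
Proof.
move=> SS'; apply: le_iint => x; first by rewrite lee_fin.
rewrite lee_fin !indicE.
by case: (boolP (x \in S)) => // /set_mem/SS'/mem_set ->.
Qed.

Lemma prod_measure_kS (k : nat) (S : set ('I_k.+1 -> Omega)) :
  prod_measure_k nu S = \int[nu]_x prod_measure_k nu [set y | S (fcons x y)].
Proof. by []. Qed.

Lemma prod_measure_k_set0 (k : nat) :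
  prod_measure_k nu (@set0 ('I_k -> Omega)) = 0.
Proof.
elim: k => [|k IH]; first by rewrite /prod_measure_k /= indicE in_set0.
rewrite prod_measure_kS [X in integral _ _ X](_ : _ = cst 0) ?integral0 //.
exact: funext.
Qed.
End IteratedIntegral.

Definition box_sublevel (R : realType) (T : Type) (k : nat) (Q : 'I_k -> set T)
  (c : T -> R) (t : R) : set ('I_k -> T) :=
  [set x | (forall i, Q i (x i)) /\ \sum_(i < k) c (x i) < t].

Lemma le_box_sublevel (R : realType) (T : Type) (k : nat) (Q : 'I_k -> set T)
  (c : T -> R) (s1 s2 : R) :
  s1 <= s2 -> box_sublevel Q c s1 `<=` box_sublevel Q c s2.
Proof. by move=> s12 x [Qx lt_s1]; split => //; exact: lt_le_trans s12. Qed.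

Lemma box_sublevel_fcons (R : realType) (T : Type) (k : nat)
  (Q : 'I_k.+1 -> set T) (c : T -> R) (t : R) (x : T) :
  [set y | box_sublevel Q c t (fcons x y)] =
  if x \in Q ord0 then box_sublevel (Q \o lift ord0) c (t - c x) else set0.
Proof.
apply/seteqP; split => y /=.
- move=> [Qy lt_t]; rewrite mem_set; last by have := Qy ord0; rewrite fcons0.
  split => [j|]; first by have := Qy (lift ord0 j); rewrite fconsS.
  move: lt_t; rewrite big_ord_recl fcons0.
  by under eq_bigr do rewrite fconsS; lra.
- case: ifPn => // /set_mem Q0x [Qy lt_t]; split.
  + move=> i; case: (unliftP ord0 i) => [j ->|->]; last by rewrite fcons0.
    by rewrite fconsS; exact: Qy.
  + by rewrite big_ord_recl fcons0; under eq_bigr do rewrite fconsS; lra.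
Qed.

Section SublevelBound.
Context (R : realType) (d : measure_display) (Omega : measurableType d)
  (nu : {measure set Omega -> \bar R}) (c : Omega -> R).
Hypotheses (mc : measurable_fun setT c) (c01 : forall x, 0 <= c x <= 1).

Lemma ae_lb_le_integral (Q : set Omega) (m : R) :
  measurable Q -> 0 <= m -> nu (Q `\` [set x | m <= c x]) = 0%E ->
  (m%:E * nu Q <= \int[nu]_(x in Q) (c x)%:E)%E.
Proof.
move=> mQ m0 null; rewrite -integral_cst //; apply: ae_ge0_le_integral => //.
- by move=> x _; rewrite lee_fin; case/andP: (c01 x).
- by apply/measurable_EFinP; exact: measurable_funS mc.
exists (Q `\` [set x | m <= c x]); split => //.
  apply: measurableD => //; rewrite -[X in measurable X]setTI.
  exact: measurable_fun_le.
by move=> x /= /not_implyP [Qx]; rewrite lee_fin.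
Qed.

Lemma box_sublevel_null_step (G : R -> \bar R) (Q : set Omega) (q t S : R) :
  measurable Q -> nu Q = q%:E -> 0 < q ->
  (forall s, (0 <= G s)%E) -> (forall s1 s2, s1 <= s2 -> (G s1 <= G s2)%E) ->
  (forall s, G s = 0%E -> s * q <= S) ->
  (\int[nu]_x ((fun x => G (t - c x)%R) \_ Q) x = 0)%E ->
  t * q <= S + \int[nu]_(x in Q) c x.
Proof.
move=> mQ nuQ q0 G0 homoG GS intG0; apply/ler_addgt0Pr => e e0.
pose t0 := (S + e) / q; pose m := t - t0.
have Gt0 : (0 < G t0)%E.
  rewrite lt0e G0 andbT; apply/eqP => /GS.
  by rewrite /t0 divfK ?gt_eqF //; lra.
have [m_lt0|m_ge0] := ltP m 0.
  have : 0 <= \int[nu]_(x in Q) c x.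
    by apply: Rintegral_ge0 => x _; case/andP: (c01 x).
  have : m * q < 0 by rewrite pmulr_llt0.
  by rewrite /m /t0 mulrBl divfK ?gt_eqF //; lra.
have mE : measurable (Q `\` [set x | m <= c x]).
  apply: measurableD => //; rewrite -[X in measurable X]setTI.
  exact: measurable_fun_le.
have null : nu (Q `\` [set x | m <= c x]) = 0%E.
  apply: (integral_eq0_null_set mE Gt0 _ _ intG0) => x.
    by rewrite patchE; case: ifPn.
  move=> [Qx /negP]; rewrite -ltNge /m => cm.
  by rewrite patchE mem_set //; apply: homoG; lra.
have := ae_lb_le_integral mQ m_ge0 null.
rewrite nuQ Rintegral_fun01E ?nuQ // -EFinM lee_fin /m /t0 mulrBl.
by rewrite divfK ?gt_eqF //; lra.
Qed.

Lemma box_sublevel_null_le (k : nat) (Q : 'I_k -> set Omega) (q t : R) :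
  (forall i, measurable (Q i)) -> (forall i, nu (Q i) = q%:E) -> 0 < q ->
  prod_measure_k nu (box_sublevel Q c t) = 0%E ->
  t * q <= \sum_(i < k) \int[nu]_(x in Q i) c x.
Proof.
elim: k Q t => [|k IH] Q t mQ nuQ q0.
  rewrite big_ord0 pmulr_lle0 // leNgt => null; apply/negP => t_gt0.
  move: null; rewrite /prod_measure_k /= indicE mem_set; last first.
    by split => [[]//|]; rewrite big_ord0.
  by move/eqP; rewrite eqe oner_eq0.
rewrite prod_measure_kS big_ord_recl addrC => null.
pose G s := prod_measure_k nu (box_sublevel (Q \o lift ord0) c s).
apply: (@box_sublevel_null_step G _ _ _ _ (mQ ord0) (nuQ ord0) q0) => //.
- by move=> s; exact: prod_measure_k_ge0.
- by move=> s1 s2 s12; apply: le_prod_measure_k; exact: le_box_sublevel.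
- by move=> s; apply: (IH (Q \o lift ord0)) => // i; [apply: mQ | apply: nuQ].
rewrite -[RHS]null; apply: eq_integral => x _.
rewrite box_sublevel_fcons patchE.
by case: ifP => // _; rewrite prod_measure_k_set0.
Qed.

End SublevelBound.

Section GraphonRepresentation.
Context (R : realType) (d : measure_display) (Omega : measurableType d)
  (nu : {measure set Omega -> \bar R}) (V : finType) (eG : rel V)
  (P : V -> set Omega) (WG : Omega -> Omega -> R).
Hypotheses (mP : forall v, measurable (P v))
  (nuP : forall v, nu (P v) = (#|V|%:R^-1)%:E)
  (disjP : forall u v, u != v -> P u `&` P v = set0)
  (covP : forall x, exists v, P v x)
  (WP : forall u v x y, P u x -> P v y -> WG x y = if eG u v then 1 else 0).
Hypothesis V_gt0 : (0 < #|V|)%N.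
Variables (k : nat) (eF : rel 'I_k).
Hypotheses (HF : simple_graph eF) (HG : simple_graph eG).

Let N : R := #|V|%:R.
Let N_gt0 : 0 < N. Proof. by rewrite ltr0n. Qed.
Let N_neq0 : N != 0. Proof. by rewrite gt_eqF. Qed.

Lemma FF_W_partE (u : 'I_k -> V) (x : 'I_k -> Omega) :
  (forall i, P (u i) (x i)) -> FF_W eF WG x <-> FF_G eF eG u.
Proof.
move=> ux; have W_edge i j : WG (x i) (x j) = if eG (u i) (u j) then 1 else 0.
  exact: WP.
split => [tensor_neq0 i j eij | uF]; last first.
  rewrite /FF_W /= /tensorF big1 ?oner_eq0 // => i _.
  by rewrite big1 // => j /andP [_ eij]; rewrite W_edge uF.
case: HF HG => eFsym eFirr [eGsym _].
wlog ltij : i j eij / (i < j)%N => [wlogH|].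
  case: (ltngtP i j) => [|gt_ij|/val_inj eq_ij]; first exact: wlogH.
    by rewrite eGsym; apply: wlogH; rewrite // eFsym.
  by rewrite eq_ij (negbTE (eFirr j)) in eij.
have : WG (x i) (x j) != 0.
  apply: contraNneq tensor_neq0 => W0.
  rewrite /tensorF (bigD1 i) //= (bigD1 j) /=.
    by rewrite W0 !mul0r.
  by rewrite ltij eij.
by rewrite W_edge; case: ifP; rewrite ?eqxx.
Qed.

Lemma averaged_is_fcov_G (c : Omega -> R) : is_fcov_W nu eF WG c ->
  is_fcov_G eF eG (fun v => N * \int[nu]_(x in P v) c x).
Proof.
case=> mc c01 bad0; split => [v|u uF].
  have I_le : \int[nu]_(x in P v) c x <= N^-1.
    rewrite -lee_fin -Rintegral_fun01E ?nuP // -(nuP v).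
    exact: le_integral_fun01.
  have I_ge0 : 0 <= \int[nu]_(x in P v) c x.
    by apply: Rintegral_ge0 => x _; case/andP: (c01 x).
  apply/andP; split; first exact: mulr_ge0 (ltW N_gt0) I_ge0.
  by rewrite -(mulfV N_neq0) ler_pM2l.
have box0 : prod_measure_k nu (box_sublevel (P \o u) c 1) = 0%E.
  apply/eqP; rewrite eq_le prod_measure_k_ge0 andbT -bad0.
  apply: le_prod_measure_k => x [ux lt1]; split => //.
  exact/(FF_W_partE ux).
have invN_gt0 : 0 < N^-1 by rewrite invr_gt0.
have := box_sublevel_null_le mc c01 (fun i => mP (u i)) (fun i => nuP (u i))
  invN_gt0 box0.
rewrite mul1r => le_sum.
by rewrite -mulr_sumr -(mulfV N_neq0) ler_pM2l.
Qed.

Lemma fcov_G_le_fcov_W : (fcov_G R eF eG <= N%:E * fcov_W nu eF WG)%E.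
Proof.
suff le_fcov : ((N^-1)%:E * fcov_G R eF eG <= fcov_W nu eF WG)%E.
  apply: le_trans (lee_wpmul2l _ le_fcov); last by rewrite lee_fin ltW.
  by rewrite muleA -EFinM mulfV // mul1e.
apply/ereal_infP => _ [c cW <-].
have [mc c01 _] := cW.
have le_fcov : (fcov_G R eF eG <= (N * \sum_v \int[nu]_(x in P v) c x)%:E)%E.
  rewrite mulr_sumr; apply: ereal_inf_lbound.
  exists (fun v => N * \int[nu]_(x in P v) c x) => //.
  exact: averaged_is_fcov_G.
rewrite (integral_partition nu mP disjP covP mc).
under eq_bigr do rewrite Rintegral_fun01E ?nuP //.
rewrite sumEFin; apply: le_trans (lee_wpmul2l _ le_fcov) _.
  by rewrite lee_fin invr_ge0 ltW.
by rewrite -EFinM mulKf.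
Qed.

Definition step_fun (c : V -> R) (x : Omega) : R :=
  \sum_(v : V) c v * \1_(P v) x.

Lemma step_funE (c : V -> R) (v : V) (x : Omega) : P v x -> step_fun c x = c v.
Proof.
move=> Pvx; rewrite /step_fun (bigD1 v) //= indicE mem_set // mulr1.
rewrite big1 ?addr0 //.
move=> w wv; rewrite indicE memNset ?mulr0 // => Pwx.
have : (P w `&` P v) x by split.
by rewrite disjP.
Qed.

Lemma measurable_step_fun (c : V -> R) : measurable_fun setT (step_fun c).
Proof.
by apply: measurable_sum => v; apply: measurable_funM.
Qed.

Lemma step_is_fcov_W (c : V -> R) : is_fcov_G eF eG c ->
  is_fcov_W nu eF WG (step_fun c).
Proof.
case=> c01 cG; split; first exact: measurable_step_fun.
  by move=> x; have [v Pvx] := covP x; rewrite (step_funE c Pvx).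
rewrite (_ : _ `&` _ = set0) ?prod_measure_k_set0 //.
apply/seteqP; split => // x [FFx] /=; apply/negP; rewrite -leNgt.
have [u ux] := boolp.choice (fun i => covP (x i)).
under eq_bigr => i _ do rewrite (step_funE c (ux i)).
exact/cG/(FF_W_partE ux).
Qed.

Lemma integral_step_fun (c : V -> R) :
  (\int[nu]_x (step_fun c x)%:E)%E = ((\sum_(v : V) c v) / N)%:E.
Proof.
rewrite (integral_partition nu mP disjP covP (measurable_step_fun c)).
rewrite mulr_suml -sumEFin; apply: eq_bigr => v _.
rewrite (eq_integral (fun _ => (c v)%:E)) => [|x /set_mem Pvx]; last first.
  by rewrite (step_funE c Pvx).
by rewrite integral_cst // nuP -EFinM.
Qed.

Lemma fcov_W_le_fcov_G : (N%:E * fcov_W nu eF WG <= fcov_G R eF eG)%E.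
Proof.
apply/ereal_infP => _ [c cG <-].
have le_fcov : (fcov_W nu eF WG <= ((\sum_v c v) / N)%:E)%E.
  rewrite -integral_step_fun; apply: ereal_inf_lbound.
  by exists (step_fun c) => //; exact: step_is_fcov_W.
apply: le_trans (lee_wpmul2l _ le_fcov) _; first by rewrite lee_fin ltW.
by rewrite -EFinM mulrC divfK.
Qed.

End GraphonRepresentation.

Theorem proposition3p13 (R : realType) (d : measure_display)
  (Omega : measurableType d) (nu : probability Omega R)
  (Hatomless : atomless nu)
  (k : nat) (eF : rel 'I_k) (HF : simple_graph eF)
  (V : finType) (eG : rel V) (HG : simple_graph eG)
  (P : V -> set Omega) (WG : Omega -> Omega -> R)
  (HWG : graphon_rep nu eG P WG) :
  fcov_G R eF eG = ((#|V|%:R : R)%:E * fcov_W nu eF WG)%E.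
Proof.
case: HWG => mP nuP disjP covP WP.
have V_gt0 : (0 < #|V|)%N.
  have [x _] : [set: Omega] !=set0.
    apply/set0P/negP => /eqP Omega0; have := probability_setT nu.
    by rewrite Omega0 measure0 => /eqP; rewrite eqe eq_sym oner_eq0.
  by have [v Pvx] := covP x; apply/card_gt0P; exists v.
apply/le_anti/andP; split.
- exact: (fcov_G_le_fcov_W mP nuP disjP covP WP V_gt0 HF HG).
- exact: (fcov_W_le_fcov_G mP nuP disjP covP WP V_gt0 HF HG).
Qed.
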